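(* Let $f$ be a multiplicative function from the positive integers to the nonnegative integers with $f(p^{k-1})\le f(p^k)$ for all primes $p$ and integers $k\ge1$. Let $n$ be $f$-practical, let $p$ be a prime with $\gcd(p,n)=1$, and let $k\ge1$. Then $np^k$ is $f$-practical if and only if $f(p^i)\le S_f(np^{i-1})+1$ for all $1\le i\le k$.
   Context: $f$ multiplicative means $f(1)=1$ and $f(ab)=f(a)f(b)$ for coprime $a,b$. $S_f(n)=\sum_{d\mid n} f(d)$. A positive integer $n$ is $f$-practical if every positive integer $m\le S_f(n)$ equals $\sum_{d\in\mathcal{D}}f(d)$ for some set $\mathcal{D}$ of distinct divisors of $n$. *)

From mathcomp Require Import all_boot.
Set Implicit Arguments. Unset Strict Implicit. Unset Printing Implicit Defensive.

(* f : positive integers -> nonnegative integers, modelled as nat -> nat;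
   the value f 0 is irrelevant and never constrained. *)
Definition multiplicative (f : nat -> nat) : Prop :=
  f 1 = 1 /\
  forall a b, 0 < a -> 0 < b -> coprime a b -> f (a * b) = f a * f b.

Definition S_f (f : nat -> nat) (n : nat) : nat :=
  \sum_(d <- divisors n) f d.

Definition f_practical (f : nat -> nat) (n : nat) : Prop :=
  forall m, 0 < m -> m <= S_f f n ->
    exists D : seq nat,
      [/\ uniq D, all (fun d => d \in divisors n) D & \sum_(d <- D) f d = m].

From mathcomp Require Import all_boot.
From mathcomp Require Import zify.

Set Implicit Arguments.
Unset Strict Implicit.
Unset Printing Implicit Defensive.

(* The divisors of n p^(j+1) are those of n p^j together with d p^(j+1) for d | n,
   so S_f(n p^(j+1)) = S_f(n p^j) + f(p^(j+1)) S_f(n).  Sufficiency: write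
   m <= S_f(n p^(j+1)) as r + q f(p^(j+1)) with r <= S_f(n p^j) and q <= S_f(n)
   (possible exactly because f(p^(j+1)) <= S_f(n p^j) + 1), and represent r and q
   inductively.  Necessity: a divisor of n p^k not dividing n p^j has f-value 0 or
   at least f(p^(j+1)), so if f(p^(j+1)) > S_f(n p^j) + 1 the value S_f(n p^j) + 1
   cannot be represented. *)

Lemma leq_sum_mem (f : nat -> nat) (s : seq nat) x :
  x \in s -> f x <= \sum_(d <- s) f d.
Proof. by move=> xs; rewrite (big_rem x) ?leq_addr. Qed.

Lemma S_f_gt0 (f : nat -> nat) m : f 1 = 1 -> 0 < m -> 0 < S_f f m.
Proof.
move=> f1 m_gt0; rewrite -f1 leq_sum_mem // -dvdn_divisors // dvd1n.
Qed.

Lemma f_practical_le (f : nat -> nat) N m : f_practical f N -> m <= S_f f N ->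
  exists D : seq nat,
    [/\ uniq D, all (fun d => d \in divisors N) D & \sum_(d <- D) f d = m].
Proof.
move=> prN; case: (posnP m) => [-> _|m_gt0]; last exact: prN.
by exists [::]; rewrite big_nil.
Qed.

Lemma bounded_euclid F T S m : F <= T.+1 -> m <= T + F * S ->
  exists2 q, q <= S & exists2 r, r <= T & m = r + q * F.
Proof.
move=> FT mTFS; case: (posnP F) => [F0|F_gt0].
  by exists 0 => //; exists m; move: mTFS; rewrite F0; lia.
case: (leqP (m %/ F) S) => [qS|Sq].
  exists (m %/ F) => //; exists (m %% F); last by rewrite addnC -divn_eq.
  by rewrite -ltnS (leq_trans (ltn_pmod m F_gt0)).
exists S => //; exists (m - S * F); last by rewrite subnK // -leq_divRL // ltnW.
by move: mTFS; lia.
Qed.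

Section PrimePowerMultiple.

Variables (n p : nat).
Hypotheses (n_gt0 : 0 < n) (p_prime : prime p) (p_coprime_n : coprime p n).

Let p_gt0 : 0 < p. Proof. exact: prime_gt0. Qed.

Lemma mul_pexp_gt0 j : 0 < n * p ^ j.
Proof. by rewrite muln_gt0 n_gt0 expn_gt0 p_gt0. Qed.

Lemma divisor_mul_pexp x j : x %| n * p ^ j ->
  exists2 a, a %| n & exists2 e, e <= j & x = a * p ^ e.
Proof.
move=> x_dvd.
have [a coprime_pa xE] := pfactor_coprime p_prime (dvdn_gt0 (mul_pexp_gt0 j) x_dvd).
exists a; last exists (logn p x) => //.
  have : a %| n * p ^ j by apply: dvdn_trans x_dvd; rewrite [X in _ %| X]xE dvdn_mulr.
  by rewrite Gauss_dvdl // coprime_sym coprimeXl.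
have : p ^ logn p x %| n * p ^ j by apply: dvdn_trans x_dvd; apply: pfactor_dvdnn.
by rewrite Gauss_dvdr ?coprimeXl // dvdn_Pexp2l // prime_gt1.
Qed.

Lemma dvdn_mul_pexp2 a e j : a %| n -> (a * p ^ e %| n * p ^ j) = (e <= j).
Proof.
move=> a_dvd; apply/idP/idP => [|ej]; last by rewrite dvdn_mul // dvdn_exp2l.
move=> /(dvdn_trans (dvdn_mull a (dvdnn (p ^ e)))).
by rewrite Gauss_dvdr ?coprimeXl // dvdn_Pexp2l // prime_gt1.
Qed.

Lemma uniq_cat_scaled (D1 D2 : seq nat) j :
  uniq D1 -> uniq D2 -> {subset D1 <= divisors (n * p ^ j)} ->
  {subset D2 <= divisors n} ->
  uniq (D1 ++ map (fun d => d * p ^ j.+1) D2).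
Proof.
move=> uD1 uD2 sD1 sD2; rewrite cat_uniq uD1 map_inj_uniq ?uD2 ?andbT /=; last first.
  by move=> a b /eqP; rewrite eqn_pmul2r ?expn_gt0 ?p_gt0 // => /eqP.
apply/hasPn => _ /mapP [d dD2 ->]; apply/negP => /sD1.
by rewrite -dvdn_divisors ?mul_pexp_gt0 // dvdn_mul_pexp2 ?ltnn // dvdn_divisors ?sD2.
Qed.

Lemma divisors_mul_pexpS j :
  perm_eq (divisors (n * p ^ j.+1))
          (divisors (n * p ^ j) ++ map (fun d => d * p ^ j.+1) (divisors n)).
Proof.
apply: uniq_perm; rewrite ?divisors_uniq ?uniq_cat_scaled ?divisors_uniq //.
move=> x; rewrite mem_cat -!dvdn_divisors ?mul_pexp_gt0 //.
apply/idP/orP => [/divisor_mul_pexp [a a_dvd [e]]|].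
  rewrite leq_eqVlt ltnS => /orP [/eqP -> ->|ej ->]; last by left; rewrite dvdn_mul_pexp2.
  by right; apply: map_f; rewrite -dvdn_divisors.
case=> [x_dvd|/mapP [d d_dvd ->]].
  by apply: dvdn_trans x_dvd _; rewrite dvdn_mul // dvdn_exp2l.
by rewrite dvdn_mul_pexp2 // dvdn_divisors.
Qed.

Variable f : nat -> nat.
Hypothesis f_mul : multiplicative f.

Lemma multiplicative_mul_pexp a e : a %| n -> f (a * p ^ e) = f a * f (p ^ e).
Proof.
move=> a_dvd; apply: f_mul.2; first exact: dvdn_gt0 a_dvd.
  by rewrite expn_gt0 p_gt0.
by rewrite coprimeXr // coprime_sym (coprime_dvdr a_dvd).
Qed.

Lemma sum_scaled (D : seq nat) e : {subset D <= divisors n} ->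
  \sum_(d <- map (fun d => d * p ^ e) D) f d = (\sum_(d <- D) f d) * f (p ^ e).
Proof.
move=> sD; rewrite big_map big_distrl /= !big_seq; apply: eq_bigr => d /sD.
by rewrite -dvdn_divisors // => /multiplicative_mul_pexp.
Qed.

Lemma S_f_mul_pexpS j :
  S_f f (n * p ^ j.+1) = S_f f (n * p ^ j) + f (p ^ j.+1) * S_f f n.
Proof.
rewrite /S_f (perm_big _ (divisors_mul_pexpS j)) big_cat /= sum_scaled //.
by rewrite [_ * f _]mulnC.
Qed.

Lemma S_f_mul_pexp_mono : {homo (fun j => S_f f (n * p ^ j)) : i j / i <= j}.
Proof. by apply: homo_leq leqnn leq_trans _ => j; rewrite S_f_mul_pexpS leq_addr. Qed.

Lemma f_practical_mul_pexpS j :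
  f_practical f n -> f_practical f (n * p ^ j) ->
  f (p ^ j.+1) <= S_f f (n * p ^ j) + 1 -> f_practical f (n * p ^ j.+1).
Proof.
move=> prn prj; rewrite addn1 => FT m _; rewrite S_f_mul_pexpS => mS.
have [q qS [r rT mE]] := bounded_euclid FT mS.
have [D1 [uD1 /allP sD1 sumD1]] := f_practical_le prj rT.
have [D2 [uD2 /allP sD2 sumD2]] := f_practical_le prn qS.
exists (D1 ++ map (fun d => d * p ^ j.+1) D2); split.
- exact: uniq_cat_scaled.
- apply/allP => x; rewrite (perm_mem (divisors_mul_pexpS j)) !mem_cat.
  case/orP => [/sD1 -> //|/mapP [d /sD2 dn ->]].
  by apply/orP; right; apply/mapP; exists d.
- by rewrite big_cat sum_scaled // sumD1 sumD2.
Qed.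

Hypothesis f_pexp_mono : forall e, f (p ^ e) <= f (p ^ e.+1).

Lemma f_nondvdn_eq0_or_ge j k x : x %| n * p ^ k -> ~~ (x %| n * p ^ j) ->
  f x = 0 \/ f (p ^ j.+1) <= f x.
Proof.
case/divisor_mul_pexp => a a_dvd [e _ ->]; rewrite dvdn_mul_pexp2 // -ltnNge => je.
rewrite multiplicative_mul_pexp //; case: (posnP (f a)) => [->|fa_gt0]; first by left.
right; apply: leq_trans (leq_pmull _ fa_gt0).
exact: (homo_leq leqnn leq_trans f_pexp_mono).
Qed.

Lemma f_practical_mul_pexp_bound j k : f_practical f (n * p ^ k) -> j < k ->
  f (p ^ j.+1) <= S_f f (n * p ^ j) + 1.
Proof.
move=> prk jk; rewrite leqNgt; apply/negP => FT.
set T := S_f f (n * p ^ j) in FT.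
have mS : T + 1 <= S_f f (n * p ^ k).
  apply: leq_trans (S_f_mul_pexp_mono jk); rewrite S_f_mul_pexpS leq_add2l.
  by rewrite muln_gt0 (S_f_gt0 f_mul.1 n_gt0) (leq_ltn_trans (leq0n _) FT).
have [D [uD /allP sD sumD]] := prk (T + 1) (leq_addl T 1) mS.
have fD x : x \in D -> f x <= T + 1 by move=> xD; rewrite -sumD leq_sum_mem.
have large0 : \sum_(x <- D | ~~ (x %| n * p ^ j)) f x = 0.
  rewrite big1_seq // => x /andP [x_ndvd xD].
  have x_dvd : x %| n * p ^ k by rewrite dvdn_divisors ?mul_pexp_gt0 ?sD.
  case: (f_nondvdn_eq0_or_ge x_dvd x_ndvd) => // Fx.
  by have := leq_trans FT (leq_trans Fx (fD x xD)); rewrite ltnn.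
have small : \sum_(x <- D | x %| n * p ^ j) f x <= T.
  rewrite -big_filter; apply: (uniq_sub_le_big leqnn (fun a b => leq_addr b a)).
  - exact: filter_uniq.
  - exact: divisors_uniq.
  by move=> x; rewrite mem_filter -dvdn_divisors ?mul_pexp_gt0 // => /andP [].
rewrite (bigID (dvdn^~ (n * p ^ j))) /= large0 addn0 in sumD.
by rewrite sumD addn1 ltnn in small.
Qed.

End PrimePowerMultiple.

Theorem theorem2p5 (f : nat -> nat) (n p k : nat) :
  multiplicative f ->
  (forall q j, prime q -> 1 <= j -> f (q ^ j.-1) <= f (q ^ j)) ->
  0 < n ->
  f_practical f n ->
  prime p -> coprime p n -> 1 <= k ->
  (f_practical f (n * p ^ k) <->
   (forall i, 1 <= i <= k -> f (p ^ i) <= S_f f (n * p ^ i.-1) + 1)).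
Proof.
move=> f_mul f_mono n_gt0 prn p_prime p_coprime_n _.
have f_pexp_mono e : f (p ^ e) <= f (p ^ e.+1) by apply: (f_mono p e.+1).
split=> [prk [//|j] /andP [_ jk]|bound].
  exact: f_practical_mul_pexp_bound prk jk.
suff prj j : j <= k -> f_practical f (n * p ^ j) by apply: prj.
elim: j => [_|j IH jk]; first by rewrite muln1.
apply: f_practical_mul_pexpS => //; first exact: IH (ltnW jk).
by apply: bound; rewrite jk.
Qed.
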